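(* Let $\mathcal{A}=\{A_1,\dots,A_m\}$ be a bimodal collection of pairwise disjoint nonempty subsets of a finite abelian group $G$, with internal difference groups $H_1,\dots,H_m$, such that $|A_i|=|H_i|$ for every $i$. Let $H=H_1+H_2+\dots+H_m$. Then each $A_i$ is a coset of $H_i$, and the sets $A_1,\dots,A_m$ arise from a subdivision of cosets of $H$, i.e. $A_1\cup\dots\cup A_m$ is a union of cosets of $H$ and each $A_i$ is contained in a single coset of $H$.
   Context: $G$ is written additively. The internal difference group $H_i$ of $A_i$ is the subgroup generated by all $x-y$ with $x,y\in A_i$; $A_i$ lies in a single coset of $H_i$ and $|A_i|\le|H_i|$. A collection $\{A_1,\dots,A_m\}$ of pairwise disjoint subsets of $G$ is bimodal if for every $i$ and every $\delta\in G\setminus\{0\}$, the number $N_i(\delta)$ of pairs $(a,b)$ with $a\in A_i$, $b\in A_j$ for some $j\neq i$, and $a-b=\delta$, satisfies $N_i(\delta)\in\{0,|A_i|\}$. *)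

From mathcomp Require Import all_boot all_fingroup.
Set Implicit Arguments.
Unset Strict Implicit.
Unset Printing Implicit Defensive.
Local Open Scope group_scope.

(* The finite abelian group G is modelled as a finGroupType gT with
   [set: gT] abelian, written multiplicatively: x - y becomes x * y^-1. *)

Definition diff_group (gT : finGroupType) (A : {set gT}) : {set gT} :=
  <<[set x * y^-1 | x in A, y in A]>>.

Definition Ncount (gT : finGroupType) (m : nat) (A : 'I_m -> {set gT})
  (i : 'I_m) (delta : gT) : nat :=
  #|[set ab : gT * gT | [&& ab.1 \in A i,
       [exists j : 'I_m, (j != i) && (ab.2 \in A j)] &
       ab.1 * ab.2^-1 == delta]]|.

Definition bimodal (gT : finGroupType) (m : nat) (A : 'I_m -> {set gT}) : Prop :=
  forall (i : 'I_m) (delta : gT), delta != 1 ->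
    Ncount A i delta = 0 \/ Ncount A i delta = #|A i|.

From mathcomp Require Import all_boot all_fingroup.
Local Open Scope group_scope.

(* If a_0 is in A_j and x_0 in A_i with i <> j, the pair (a_0, x_0) is counted by
   N_j(a_0 x_0^-1) > 0, so bimodality forces N_j(a_0 x_0^-1) = |A_j|: every a in A_j
   is matched with a partner a (a_0 x_0^-1)^-1 outside A_j.  With a = a_0 h for
   h in H_j, the partner is x_0 h, so the union U of the A_i is stable under every
   H_j, hence under H.  When |A_i| = |H_i| the set A_i, which lies in one coset of
   H_i, is that coset, and U, being H-stable, is a union of H-cosets. *)

Section DiffGroup.

Context {gT : finGroupType}.

Lemma mem_diff_group {A : {set gT}} {x y : gT} :
  x \in A -> y \in A -> x * y^-1 \in diff_group A.
Proof. by move=> xA yA; apply/mem_gen/imset2P; exists x y. Qed.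

Lemma diff_group_rcoset {A : {set gT}} {a : gT} :
  a \in A -> #|A| = #|diff_group A| -> A = diff_group A :* a.
Proof.
move=> aA cardA; apply/eqP; rewrite eqEcard card_rcoset -cardA leqnn andbT.
by apply/subsetP=> x xA; rewrite mem_rcoset mem_diff_group.
Qed.

End DiffGroup.

Section Bimodal.

Context {gT : finGroupType} {m : nat} {A : 'I_m -> {set gT}}.

Let pairs i d := [set ab : gT * gT | [&& ab.1 \in A i,
  [exists j : 'I_m, (j != i) && (ab.2 \in A j)] & ab.1 * ab.2^-1 == d]].

Lemma Ncount_gt0 {i k : 'I_m} {a c : gT} :
  k != i -> a \in A i -> c \in A k -> 0 < Ncount A i (a * c^-1).
Proof.
move=> ki aA cA; apply/card_gt0P; exists (a, c).
by rewrite inE /= aA eqxx andbT; apply/existsP; exists k; rewrite ki cA.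
Qed.

Lemma Ncount_full_partner {i : 'I_m} {d a : gT} :
  Ncount A i d = #|A i| -> a \in A i ->
  exists2 k : 'I_m, k != i & d^-1 * a \in A k.
Proof.
move=> full aA; pose partner b := (b, d^-1 * b).
have sub_partner : pairs i d \subset partner @: A i.
  apply/subsetP=> -[b c]; rewrite inE /= => /and3P [bA _ /eqP def_d].
  by apply/imsetP; exists b => //; rewrite /partner -def_d invMg invgK mulgKV.
have /eqP eq_partner : pairs i d == partner @: A i.
  rewrite eqEcard sub_partner card_imset -?full; last by move=> b1 b2 [].
  exact: leqnn.
have : partner a \in pairs i d by rewrite eq_partner imset_f.
by rewrite inE /= => /and3P [_ /existsP [k /andP [ki dak]] _]; exists k.
Qed.

Lemma bimodal_partner {i k : 'I_m} {b x a : gT} :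
  bimodal A -> [disjoint A i & A k] -> k != i ->
  b \in A i -> x \in A k -> a \in A i ->
  exists2 l : 'I_m, l != i & x * b^-1 * a \in A l.
Proof.
move=> bim disjAik ki bA xA aA.
have d_neq1 : b * x^-1 != 1.
  rewrite -eq_mulgV1; apply: contraTneq bA => ->.
  by rewrite (disjointFl disjAik xA).
have full : Ncount A i (b * x^-1) = #|A i|.
  have [N0 | //] := bim i _ d_neq1.
  by have := Ncount_gt0 ki bA xA; rewrite N0.
by have := Ncount_full_partner full aA; rewrite invMg invgK.
Qed.

End Bimodal.

Section Subdivision.

Context {gT : finGroupType} {m : nat} {A : 'I_m -> {set gT}}.

Hypothesis abelT : abelian [set: gT].
Hypothesis disjA : forall i j : 'I_m, i != j -> [disjoint A i & A j].
Hypothesis bimA : bimodal A.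
Hypothesis cardA : forall i : 'I_m, #|A i| = #|diff_group (A i)|.

Let U := \bigcup_(i < m) A i.
Let H := <<\bigcup_(i < m) diff_group (A i)>>.

Lemma commT (x y : gT) : commute x y.
Proof. exact: (centsP abelT) x (in_setT x) y (in_setT y). Qed.

Lemma exists_diff_group_rcoset (i : 'I_m) :
  exists a : gT, A i = diff_group (A i) :* a.
Proof.
have [a aA] : exists a, a \in A i by apply/card_gt0P; rewrite cardA cardG_gt0.
by exists a; apply: diff_group_rcoset.
Qed.

Lemma rcoset_diff_group_id {i : 'I_m} {h : gT} :
  h \in diff_group (A i) -> A i :* h = A i.
Proof.
move=> hHi; have [a ->] := exists_diff_group_rcoset i.
by rewrite -rcosetM -(commT h) rcosetM rcoset_id.
Qed.

Lemma bigcup_mul_diff_group {j : 'I_m} {h x : gT} :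
  h \in diff_group (A j) -> x \in U -> x * h \in U.
Proof.
move=> hHj /bigcupP [i _ xA].
have [eq_ij | neq_ij] := eqVneq i j.
  apply/bigcupP; exists j => //.
  by rewrite -(rcoset_diff_group_id hHj) mem_rcoset mulgK -eq_ij.
have [b bA] : exists b, b \in A j by apply/card_gt0P; rewrite cardA cardG_gt0.
have bhA : b * h \in A j by rewrite -(rcoset_diff_group_id hHj) mem_rcoset mulgK.
have disj_ji : [disjoint A j & A i] by apply: disjA; rewrite eq_sym.
have [l _ xhA] := bimodal_partner bimA disj_ji neq_ij bA xA bhA.
by apply/bigcupP; exists l; rewrite // mulgA mulgKV in xhA.
Qed.

Lemma bigcup_rcoset_id (h : gT) : h \in H -> U :* h = U.
Proof.
have stab : \bigcup_(i < m) diff_group (A i) \subset 'C[U | 'Rs].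
  apply/subsetP=> h' /bigcupP [j _ h'Hj]; apply/astab1P; rewrite /= rcosetE.
  apply/eqP; rewrite eqEcard card_rcoset leqnn andbT.
  by apply/subsetP=> _ /rcosetP [x xU ->]; apply: bigcup_mul_diff_group h'Hj xU.
by move: stab; rewrite -gen_subG => /subsetP stabH /stabH /astab1P; rewrite /= rcosetE.
Qed.

Lemma cover_rcosets_bigcup : cover (rcosets H U) = U.
Proof.
apply/setP=> y; apply/bigcupP/idP => [[_ /imsetP [x xU ->]] | yU].
  rewrite rcosetE mem_rcoset => /bigcup_rcoset_id <-.
  by rewrite mem_rcoset invMg invgK (commT x) mulKVg.
by exists (H :* y); [rewrite -rcosetE imset_f | apply: rcoset_refl].
Qed.

Lemma rcoset_diff_group_sub {i : 'I_m} {a : gT} :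
  A i = diff_group (A i) :* a -> A i \subset H :* a.
Proof.
by move=> ->; rewrite rcosetS; apply/sub_gen/(bigcup_sup i).
Qed.

End Subdivision.

Theorem theorem3p18 (gT : finGroupType) (m : nat) (A : 'I_m -> {set gT}) :
  abelian [set: gT] ->
  (forall i j : 'I_m, i != j -> [disjoint A i & A j]) ->
  (forall i : 'I_m, A i != set0) ->
  bimodal A ->
  (forall i : 'I_m, #|A i| = #|diff_group (A i)|) ->
  let H := <<\bigcup_(i < m) diff_group (A i)>> in
  (forall i : 'I_m, exists a : gT, A i = diff_group (A i) :* a) /\
  (exists C : {set {set gT}},
      C \subset rcosets H [set: gT] /\ cover C = \bigcup_(i < m) A i) /\
  (forall i : 'I_m, exists x : gT, A i \subset H :* x).
Proof.
(* Nonemptiness of each A i already follows from |A i| = |diff_group (A i)|. *)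
move=> abelT disjA _ bimA cardA H.
split; first exact: exists_diff_group_rcoset cardA.
split.
  exists (rcosets H (\bigcup_(i < m) A i)); split; first exact/imsetS/subsetT.
  exact: cover_rcosets_bigcup.
move=> i; have [a eqA] := exists_diff_group_rcoset cardA i.
by exists a; apply: rcoset_diff_group_sub.
Qed.
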